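(* Let $(a_n)_{n\ge1}$ be the sequence defined by $a_1=1$ and $a_n = a_{n-1}\left(1-\frac{a_{n-1}}{n}\right)$ for $n\ge 2$. Then $\frac{1}{a_n}\sim \log n$, i.e. $\lim_{n\to\infty} \frac{1/a_n}{\log n}=1$.
   Context: $\log$ denotes the natural logarithm. The sequence $(a_n)$ is defined by the recurrence $a_1=1$, $a_n=a_{n-1}(1-a_{n-1}/n)$ for $n\ge2$. *)

From Stdlib Require Import Reals.
From Coquelicot Require Import Coquelicot.
Open Scope R_scope.

(* a n for n >= 1: a 1 = 1, a n = a (n-1) * (1 - a (n-1) / n) for n >= 2.
   The value at index 0 is a junk value (set to 1) and is never used by
   the recurrence for n >= 1 or by the limit statement. *)
Fixpoint a (n : nat) : R :=
  match n with
  | O => 1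
  | S O => 1
  | S (S k as m) => a m * (1 - a m / INR (S m))
  end.

(* With b n := / a n the recurrence becomes additive,
   b (n+1) = b n + 1 / (n + 1 - a n), and 0 < a n <= 1 traps the increment
   between 1/(n+1) and 1/n.  Comparing with ln (n+1) - ln n, which lies in the
   same interval, gives ln (n+1) <= b n <= 2 + ln n, and dividing by ln n
   squeezes the ratio to 1. *)

From Stdlib Require Import Reals Lra Lia.
From Coquelicot Require Import Coquelicot.
Open Scope R_scope.

Lemma ln_le_sub1 (y : R) : 0 < y -> ln y <= y - 1.
Proof.
  intros Hy; pose proof (exp_ineq1_le (ln y)) as H.
  rewrite exp_ln in H; lra.
Qed.

Lemma inv_succ_le_ln_diff (x : R) : 0 < x -> / (x + 1) <= ln (x + 1) - ln x.
Proof.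
  intros Hx.
  assert (Hq : 0 < x / (x + 1)) by (apply Rdiv_lt_0_compat; lra).
  pose proof (ln_le_sub1 _ Hq) as H.
  rewrite ln_div in H by lra.
  replace (x / (x + 1) - 1) with (- / (x + 1)) in H by (field; lra).
  lra.
Qed.

Lemma ln_diff_le_inv (x : R) : 0 < x -> ln (x + 1) - ln x <= / x.
Proof.
  intros Hx.
  assert (Hq : 0 < (x + 1) / x) by (apply Rdiv_lt_0_compat; lra).
  pose proof (ln_le_sub1 _ Hq) as H.
  rewrite ln_div in H by lra.
  replace ((x + 1) / x - 1) with (/ x) in H by (field; lra).
  lra.
Qed.

Lemma is_lim_seq_div_ln (b : nat -> R) (C : R) :
  (forall n, (2 <= n)%nat -> ln (INR n) <= b n <= C + ln (INR n)) ->
  is_lim_seq (fun n => b n / ln (INR n)) 1.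
Proof.
  intros Hb.
  assert (Hln : is_lim_seq (fun n => ln (INR n)) p_infty).
  { apply (is_lim_comp_seq ln INR p_infty p_infty).
    - exact is_lim_ln_p.
    - exists 0%nat; discriminate.
    - exact is_lim_seq_INR. }
  assert (Hinv : is_lim_seq (fun n => C * / ln (INR n)) 0).
  { replace 0 with (C * Rbar_inv p_infty) by (simpl; ring).
    apply (is_lim_seq_scal_l _ C (Rbar_inv p_infty)).
    apply is_lim_seq_inv; [exact Hln | discriminate]. }
  apply is_lim_seq_le_le_loc with (fun _ => 1) (fun n => 1 + C * / ln (INR n)).
  - exists 2%nat; intros n Hn.
    assert (Hpos : 0 < ln (INR n)).
    { rewrite <- ln_1; apply ln_increasing; [lra|].
      apply lt_1_INR; lia. }
    specialize (Hb n Hn).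
    split; apply (Rmult_le_reg_r (ln (INR n))); trivial; field_simplify; lra.
  - apply is_lim_seq_const.
  - replace (Finite 1) with (Rbar_plus 1 0) by (simpl; f_equal; ring).
    apply is_lim_seq_plus'; [apply is_lim_seq_const | exact Hinv].
Qed.

Lemma a_pos_le1 (k : nat) : 0 < a (S k) <= 1.
Proof.
  induction k as [|k IH]; [simpl; lra|].
  change (a (S (S k))) with (a (S k) * (1 - a (S k) / INR (S (S k)))).
  assert (HN : 1 < INR (S (S k))) by (apply lt_1_INR; lia).
  assert (Hq : 0 < a (S k) / INR (S (S k)) < 1).
  { split; [apply Rdiv_lt_0_compat; lra|].
    apply (Rdiv_lt_1 (a (S k))); lra. }
  split; nra.
Qed.

Lemma inv_a_succ (k : nat) :
  / a (S (S k)) = / a (S k) + / (INR (S (S k)) - a (S k)).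
Proof.
  change (a (S (S k))) with (a (S k) * (1 - a (S k) / INR (S (S k)))).
  pose proof (a_pos_le1 k).
  assert (HN : 1 < INR (S (S k))) by (apply lt_1_INR; lia).
  field; lra.
Qed.

Lemma inv_a_increment_bounds (k : nat) :
  / INR (S (S k)) <= / a (S (S k)) - / a (S k) <= / INR (S k).
Proof.
  rewrite inv_a_succ, S_INR.
  pose proof (a_pos_le1 k); pose proof (lt_0_INR (S k) (Nat.lt_0_succ k)).
  replace (/ a (S k) + / (INR (S k) + 1 - a (S k)) - / a (S k))
    with (/ (INR (S k) + 1 - a (S k))) by ring.
  split; apply Rinv_le_contravar; lra.
Qed.

Lemma ln_le_inv_a (k : nat) : ln (INR (S (S k))) <= / a (S k).
Proof.
  induction k as [|k IH].
  - replace (INR 2) with 2 by (simpl; ring).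
    change (a 1) with 1; rewrite Rinv_1.
    pose proof (ln_le_sub1 2 Rlt_0_2); lra.
  - pose proof (inv_a_increment_bounds k).
    pose proof (ln_diff_le_inv (INR (S (S k))) (lt_0_INR _ (Nat.lt_0_succ _))).
    rewrite (S_INR (S (S k))); lra.
Qed.

(* The extra term / n makes the invariant inductive. *)
Lemma inv_a_le_ln (k : nat) : / a (S k) + / INR (S k) <= 2 + ln (INR (S k)).
Proof.
  induction k as [|k IH].
  - simpl; rewrite ln_1, Rinv_1; lra.
  - pose proof (inv_a_increment_bounds k).
    pose proof (inv_succ_le_ln_diff (INR (S k)) (lt_0_INR _ (Nat.lt_0_succ _))).
    rewrite (S_INR (S k)) in *; lra.
Qed.

Theorem mainTheorem3 :
  is_lim_seq (fun n : nat => (/ a n) / ln (INR n)) 1.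
Proof.
  apply is_lim_seq_div_ln with 2.
  intros [|k] Hk; [lia|].
  split.
  - apply Rle_trans with (ln (INR (S (S k)))); [|apply ln_le_inv_a].
    apply ln_le; [apply lt_0_INR; lia | apply le_INR; lia].
  - pose proof (inv_a_le_ln k).
    pose proof (Rinv_0_lt_compat _ (lt_0_INR (S k) (Nat.lt_0_succ k))).
    lra.
Qed.
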